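(* Let $n\ge1$ and let $\mathbf{u}_0,\dots,\mathbf{u}_n$ be linearly independent unit vectors in $\mathbf{C}^{n+1}$. For a nonzero $\mathbf{c}$ let $H_{\mathbf{c}}=\{[\mathbf{x}]\in\mathbf{CP}^n:\mathbf{c}\cdot\mathbf{x}=0\}$; the hyperplanes $H_{\mathbf{u}_0},\dots,H_{\mathbf{u}_n}$ are the faces of a projective simplex. For each $j$ let $P_j$ be the unique point of $\bigcap_{i\ne j}H_{\mathbf{u}_i}$ (the vertex opposite $H_{\mathbf{u}_j}$), let $d_j$ be the Fubini–Study distance from $P_j$ to $H_{\mathbf{u}_j}$, and let $d_{\min}=\min_j d_j$. Then $$d_{\min}^n\le|\det(\mathbf{u}_0,\dots,\mathbf{u}_n)|\le d_{\min}.$$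
   Context: The dot product on $\mathbf{C}^{n+1}$ is the bilinear form $\mathbf{a}\cdot\mathbf{b}=\sum_i a_ib_i$ (standard basis $\mathbf{e}_0,\dots,\mathbf{e}_n$), and $|\mathbf{a}|^2=\mathbf{a}\cdot\overline{\mathbf{a}}$. On $\Lambda^k\mathbf{C}^{n+1}$ the basis $\mathbf{e}_{i_1}\wedge\dots\wedge\mathbf{e}_{i_k}$ is declared orthonormal, giving a norm $|\omega|^2=\omega\cdot\overline\omega$. $\mathbf{CP}^n$ is the set of classes $[\mathbf{v}]$ of nonzero vectors modulo nonzero scalars. The Fubini–Study distance between points represented by unit vectors $\mathbf{v},\mathbf{w}$ is $|\mathbf{v}\wedge\mathbf{w}|$; the distance from a point $[\mathbf{u}]$ ($|\mathbf{u}|=1$) to a hyperplane $H_{\mathbf{c}}$ is $\min\{|\mathbf{u}\wedge\mathbf{x}|:\mathbf{c}\cdot\mathbf{x}=0,\ |\mathbf{x}|=1\}$. $\det(\mathbf{u}_0,\dots,\mathbf{u}_n)$ is the determinant of the matrix with these rows. *)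

From HB Require Import structures.
From mathcomp Require Import all_boot all_order all_algebra.
Set Implicit Arguments. Unset Strict Implicit. Unset Printing Implicit Defensive.
Import Order.TTheory GRing.Theory Num.Theory.
Local Open Scope ring_scope.

Section Defs.
Variable C : numClosedFieldType.

Definition dotv k (a b : 'rV[C]_k) : C := \sum_(i < k) a 0 i * b 0 i.

Definition conjv k (a : 'rV[C]_k) : 'rV[C]_k := map_mx (fun z : C => z^*) a.

Definition vnorm k (a : 'rV[C]_k) : C := sqrtC (dotv a (conjv a)).

(* |v /\ w| with e_i /\ e_j (i<j) orthonormal: coordinates v_i w_j - v_j w_i *)
Definition wedge_coef k (v w : 'rV[C]_k) (i j : 'I_k) : C :=
  v 0 i * w 0 j - v 0 j * w 0 i.
Definition wedge_norm k (v w : 'rV[C]_k) : C :=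
  sqrtC (\sum_(i < k) \sum_(j < k | (i < j)%N)
           wedge_coef v w i j * (wedge_coef v w i j)^*).

(* d is the Fubini-Study distance from [u] (|u|=1) to H_c:
   d = min { |u /\ x| : c.x = 0, |x| = 1 } (minimum attained) *)
Definition is_dist_pt_hyp k (u c : 'rV[C]_k) (d : C) : Prop :=
  (exists x, [/\ dotv c x = 0, vnorm x = 1 & wedge_norm u x = d]) /\
  (forall x, dotv c x = 0 -> vnorm x = 1 -> d <= wedge_norm u x).

End Defs.

From HB Require Import structures.
From mathcomp Require Import all_boot all_order all_algebra perm.
From mathcomp Require Import sesquilinear spectral ring.
Import Order.TTheory GRing.Theory Num.Theory.
Local Open Scope ring_scope.
Set Implicit Arguments. Unset Strict Implicit. Unset Printing Implicit Defensive.

(* Write u_j . x as the Hermitian product <x, conj u_j>, and factor the matrix of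
   the u_j as U = L B with B unitary and L lower triangular (Gram-Schmidt), so
   that |det U| = prod_j |L_jj| with |L_jj| <= 1 as the rows are unit vectors.
   The distance from a unit vector P to H_u is |u . P| (Bessel, with equality
   at the normalised component of P orthogonal to conj u).  A unit vector x
   orthogonal to the rows u_i, i < j, has coordinates x B^* vanishing below j,
   so |u_j . x| <= |L_jj|, with equality when j is the last row.  Applied to
   the vertices this gives |det U| >= prod_(j >= 1) d_j >= d_min^n, and, after
   moving the row realising d_min to the end, |det U| <= d_min. *)

Lemma double_sum_sym (R : nmodType) k (f : 'I_k -> 'I_k -> R) :
  (forall i j, f i j = f j i) -> (forall i, f i i = 0) ->
  \sum_i \sum_j f i j = (\sum_(i < k) \sum_(j < k | (i < j)%N) f i j) *+ 2.
Proof.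
move=> f_sym f_diag.
have -> : \sum_i \sum_j f i j =
    \sum_(i < k) \sum_(j < k) (if (i < j)%N then f i j else 0) +
    \sum_(i < k) \sum_(j < k) (if (j < i)%N then f i j else 0).
  rewrite -big_split; apply: eq_bigr => i _; rewrite -big_split.
  apply: eq_bigr => j _ /=.
  by case: ltngtP => [_|_|/val_inj->]; rewrite ?addr0 ?add0r ?f_diag ?addr0.
rewrite mulr2n; congr (_ + _); first by apply: eq_bigr => i _; rewrite [RHS]big_mkcond.
rewrite exchange_big; apply: eq_bigr => i _; rewrite [RHS]big_mkcond.
by apply: eq_bigr => j _; rewrite f_sym.
Qed.

Lemma row_xrow (R : Type) m n (a b i : 'I_m) (A : 'M[R]_(m, n)) :
  row i (xrow a b A) = row (tperm a b i) A.
Proof. by apply/rowP => l; rewrite !mxE. Qed.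

Lemma normdet_xrow (R : numDomainType) m (a b : 'I_m) (A : 'M[R]_m) :
  `|\det (xrow a b A)| = `|\det A|.
Proof. by rewrite xrowE det_mulmx det_perm normrM normr_sign mul1r. Qed.

Section FubiniStudy.
Variable C : numClosedFieldType.
Local Open Scope sesquilinear_scope.
Local Notation "''[' u , v ]" := (@dotmx C _ u v).
Local Notation "''[' u ]" := (@dotmx C _ u u).

Lemma dotmx_sum k (u v : 'rV[C]_k) : '[u, v] = \sum_i u 0 i * (v 0 i)^*.
Proof. by rewrite dotmxE mxE; apply: eq_bigr => i _; rewrite !mxE. Qed.

Lemma dotmxC k (u v : 'rV[C]_k) : '[u, v] = '[v, u]^*.
Proof. by rewrite hermC /= expr0 mul1r. Qed.

Lemma coord_norm_le_dnorm k (v : 'rV[C]_k) i : `|v 0 i| ^+ 2 <= '[v].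
Proof.
rewrite dotmx_sum (bigD1 i) //= normCK lerDl sumr_ge0 // => j _.
exact: mul_conjC_ge0.
Qed.

Lemma dotmx_mulmx_unitary k (B : 'M[C]_k) (u v : 'rV[C]_k) :
  B \is unitarymx -> '[u *m B, v *m B] = '[u, v].
Proof.
move=> /unitarymxP B_unitary.
by rewrite !dotmxE trmx_mul map_mxM mulmxA -(mulmxA u) B_unitary mulmx1.
Qed.

Lemma dotmx_cauchy_schwarz k (u v : 'rV[C]_k) : `|'[u, v]| ^+ 2 <= '[u] * '[v].
Proof. exact: CauchySchwarz. Qed.

Lemma dotvE k (a b : 'rV[C]_k) : dotv a b = '[a, conjv b].
Proof. by rewrite dotmx_sum; apply: eq_bigr => i _; rewrite !mxE conjCK. Qed.

Lemma dotmx_conjv k (a b : 'rV[C]_k) : '[conjv a, conjv b] = '[b, a].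
Proof. by rewrite !dotmx_sum; apply: eq_bigr => i _; rewrite !mxE conjCK mulrC. Qed.

Lemma dotvC k (a b : 'rV[C]_k) : dotv a b = dotv b a.
Proof. by apply: eq_bigr => i _; rewrite mulrC. Qed.

Lemma vnormE k (a : 'rV[C]_k) : vnorm a = sqrtC '[a].
Proof.
by rewrite /vnorm dotvE; congr (sqrtC '[_, _]); apply/rowP => i; rewrite !mxE conjCK.
Qed.

Lemma vnorm_eq1 k (a : 'rV[C]_k) : vnorm a = 1 -> '[a] = 1.
Proof. by rewrite vnormE => a1; rewrite -[LHS]sqrtCK a1 expr1n. Qed.

Lemma lagrange_identity k (u v : 'rV[C]_k) :
  \sum_(i < k) \sum_(j < k | (i < j)%N) wedge_coef u v i j * (wedge_coef u v i j)^* =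
  '[u] * '[v] - `|'[u, v]| ^+ 2.
Proof.
apply: (@mulfI _ 2%:R); first by rewrite pnatr_eq0.
rewrite !mulr_natl -double_sum_sym; first last.
- by move=> i; rewrite /wedge_coef subrr mul0r.
- by move=> i j; rewrite /wedge_coef -[in LHS]opprB rmorphN mulrNN.
pose a i j := u 0 i * (u 0 i)^* * (v 0 j * (v 0 j)^*).
pose b i j := u 0 i * (v 0 i)^* * (v 0 j * (u 0 j)^*).
have -> : \sum_i \sum_j wedge_coef u v i j * (wedge_coef u v i j)^* =
    \sum_(i < k) \sum_(j < k) (a i j + a j i) -
    \sum_(i < k) \sum_(j < k) (b i j + b j i).
  rewrite -sumrB; apply: eq_bigr => i _; rewrite -sumrB; apply: eq_bigr => j _.
  by rewrite /wedge_coef /a /b rmorphB !rmorphM /=; ring.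
under eq_bigr do rewrite big_split; under [X in _ - X]eq_bigr do rewrite big_split.
rewrite !big_split /= [\sum_i \sum_j a j i]exchange_big.
rewrite [\sum_i \sum_j b j i]exchange_big /=.
rewrite normCK [X in X ^*]dotmxC conjCK !dotmx_sum -!big_distrlr.
by rewrite mulrnBl !mulr2n.
Qed.

Lemma wedge_norm_unit k (u v : 'rV[C]_k) : '[u] = 1 -> '[v] = 1 ->
  wedge_norm u v = sqrtC (1 - `|'[u, v]| ^+ 2).
Proof. by move=> u1 v1; rewrite /wedge_norm lagrange_identity u1 v1 mul1r. Qed.

Lemma wedge_norm_le1 k (u v : 'rV[C]_k) : '[u] = 1 -> '[v] = 1 ->
  wedge_norm u v <= 1.
Proof.
move=> u1 v1; rewrite wedge_norm_unit // -[X in _ <= X]sqrtC1 ler_sqrtC ?nnegrE //.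
  by rewrite gerBl exprn_ge0.
by rewrite subr_ge0 (le_trans (dotmx_cauchy_schwarz u v)) // u1 v1 mulr1.
Qed.

Section ProjectionOntoUnitVector.
Variables (k : nat) (v : 'rV[C]_k).
Hypothesis v1 : '[v] = 1.

Lemma dotmx_proj_compl u : '[u - '[u, v] *: v, v] = 0.
Proof. by rewrite linearBl linearZl_LR /= v1 mulr1 subrr. Qed.

Lemma dnorm_proj_compl u : '[u - '[u, v] *: v] = '[u] - `|'[u, v]| ^+ 2.
Proof.
rewrite linearBl !linearBr !linearZl_LR !linearZr_LR /= v1 [in '[v, u]]dotmxC.
by rewrite normCK; ring.
Qed.

Lemma bessel_orthonormal u x : '[x] = 1 -> '[x, v] = 0 ->
  `|'[u, x]| ^+ 2 + `|'[u, v]| ^+ 2 <= '[u].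
Proof.
move=> x1 xv; set y := u - '[u, v] *: v.
have yx : '[y, x] = '[u, x].
  by rewrite linearBl linearZl_LR /= [in '[v, x]]dotmxC xv conjC0 mulr0 subr0.
rewrite -lerBrDr -dnorm_proj_compl -/y -yx.
by rewrite (le_trans (dotmx_cauchy_schwarz y x)) // x1 mulr1.
Qed.

Lemma exists_wedge_norm_eq_dotmx u : '[u] = 1 -> u - '[u, v] *: v != 0 ->
  exists x, [/\ '[x] = 1, '[x, v] = 0 & wedge_norm u x = `|'[u, v]|].
Proof.
move=> u1 y_neq0; set y := u - '[u, v] *: v in y_neq0 *.
have yv : '[y, v] = 0 by exact: dotmx_proj_compl.
have uy : '[u, y] = '[y].
  by rewrite [in RHS]linearBl linearZl_LR /= [in '[v, y]]dotmxC yv conjC0 mulr0 subr0.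
set s := sqrtC '[y].
have s_gt0 : 0 < s by rewrite sqrtC_gt0 dnorm_gt0.
have s2 : s ^+ 2 = '[y] by rewrite sqrtCK.
have x1 : '[s^-1 *: y] = 1.
  rewrite linearZl_LR linearZr_LR /= geC0_conj ?invr_ge0 ?ltW // -s2 mulrA.
  by rewrite -expr2 -exprMn mulVf ?gt_eqF // expr1n.
exists (s^-1 *: y); split=> //; first by rewrite linearZl_LR /= yv mulr0.
rewrite wedge_norm_unit // linearZr_LR /= uy -s2 geC0_conj ?invr_ge0 ?ltW //.
rewrite [s ^+ 2]expr2 mulrA mulVf ?gt_eqF // mul1r (gtr0_norm s_gt0) s2.
by rewrite dnorm_proj_compl u1 opprB addrC subrK sqrCK.
Qed.

End ProjectionOntoUnitVector.

Lemma dot_le_wedge_norm k (u v x : 'rV[C]_k) : '[u] = 1 -> '[v] = 1 ->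
  '[x] = 1 -> '[x, v] = 0 -> `|'[u, v]| <= wedge_norm u x.
Proof.
move=> u1 v1 x1 xv; have := bessel_orthonormal v1 u x1 xv.
rewrite wedge_norm_unit // u1 -lerBrDl => bessel.
rewrite -(sqrCK (normr_ge0 '[u, v])) ler_sqrtC ?nnegrE ?exprn_ge0 //.
exact: le_trans (exprn_ge0 _ (normr_ge0 _)) bessel.
Qed.

Lemma dist_pt_hyp_eq k (P u : 'rV[C]_k) d : '[P] = 1 -> '[u] = 1 ->
  is_dist_pt_hyp P u d -> d = `|dotv u P|.
Proof.
move=> P1 u1 [[x0 [ux0 /vnorm_eq1 x0_1 <-]] d_min].
set v := conjv u; have v1 : '[v] = 1 by rewrite dotmx_conjv.
have dotv_dotmx x : dotv u x = '[x, v] by rewrite dotvC dotvE.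
rewrite dotv_dotmx; rewrite dotv_dotmx in ux0.
apply/le_anti; rewrite (dot_le_wedge_norm P1 v1 x0_1 ux0) andbT.
have [y0|y_neq0] := eqVneq (P - '[P, v] *: v) 0.
  suff -> : `|'[P, v]| = 1 by rewrite wedge_norm_le1.
  have /eqP := dnorm_proj_compl v1 P; rewrite y0 linear0l P1 eq_sym subr_eq0 eq_sym.
  by rewrite sqrp_eq1 // => /eqP.
have [x [x1 xv <-]] := exists_wedge_norm_eq_dotmx v1 P1 y_neq0.
by apply: d_min; rewrite ?dotv_dotmx ?vnormE ?x1 ?sqrtC1.
Qed.

Lemma normdet_unitary k (B : 'M[C]_k) : B \is unitarymx -> `|\det B| = 1.
Proof.
move=> /unitarymxP /(congr1 determinant); rewrite det_mulmx det1 det_map_mx det_tr.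
by move=> detB; apply/eqP; rewrite -(@sqrp_eq1 _ `|\det B|) // normCK detB.
Qed.

Lemma lower_unitary_factor k (A : 'M[C]_k) : exists L B,
  [/\ B \is unitarymx, A = L *m B & forall i j : 'I_k, (i < j)%N -> L i j = 0].
Proof.
have B_unitary : schmidt A \is unitarymx by apply: schmidt_unitarymx.
exists (A *m (schmidt A)^t*), (schmidt A); split => //.
- by rewrite mulmxKtV.
- move=> i j i_lt_j.
  have : (row i A <= kermx ((row j (schmidt A))^t*))%MS.
    apply: submx_trans (row_schmidt_sub A i) _.
    apply/sumsmx_subP => l l_le_i; rewrite genmxE; apply/sub_kermxP.
    rewrite (mx11_scalar (_ *m _)) -dotmxE (row_unitarymxP _) //.
    rewrite -val_eqE (ltn_eqF (leq_ltn_trans l_le_i i_lt_j)).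
    by apply/matrixP => a b; rewrite !mxE mul0rn.
  move/sub_kermxP/matrixP/(_ 0 0); rewrite !mxE => orth.
  by rewrite -[RHS]orth; apply: eq_bigr => l _; rewrite !mxE.
Qed.

Section LowerUnitaryFactor.
Variables (k : nat) (A L B : 'M[C]_k.+1).
Hypotheses (B_unitary : B \is unitarymx) (defA : A = L *m B).
Hypothesis L_lower : forall i j : 'I_k.+1, (i < j)%N -> L i j = 0.

Lemma normdet_factor : `|\det A| = \prod_i `|L i i|.
Proof.
rewrite defA det_mulmx normrM (normdet_unitary B_unitary) mulr1.
by rewrite det_trig ?normr_prod //; apply/is_trig_mxP.
Qed.

Lemma dotmx_row_factor j x : '[row j A, x] = '[row j L, x *m B^t*].
Proof. by rewrite defA row_mul -[RHS](dotmx_mulmx_unitary _ _ B_unitary) mulmxKtV. Qed.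

Lemma dnorm_row_factor i : '[row i A] = '[row i L].
Proof. by rewrite defA row_mul dotmx_mulmx_unitary. Qed.

Lemma dnorm_coord_factor x : '[x *m B^t*] = '[x].
Proof. by rewrite dotmx_mulmx_unitary ?trmxC_unitary. Qed.

Lemma norm_diag_factor_le1 i : '[row i A] = 1 -> `|L i i| <= 1.
Proof.
move=> Ai1; rewrite -(@expr_le1 _ 2) //.
by have := coord_norm_le_dnorm (row i L) i; rewrite -dnorm_row_factor Ai1 mxE.
Qed.

Lemma norm_first_diag_factor : '[row 0 A] = 1 -> `|L 0 0| = 1.
Proof.
rewrite dnorm_row_factor dotmx_sum (bigD1 0) //= big1 ?addr0 => [|l l_neq0].
  by rewrite !mxE -normCK => L0; apply/eqP; rewrite -(@sqrp_eq1 _ `|L 0 0|) // L0.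
by rewrite mxE L_lower ?mul0r // lt0n.
Qed.

Lemma factor_diag_neq0 : \det A != 0 -> forall i, L i i != 0.
Proof.
move=> detA i; apply: contraNneq detA => Lii0.
by rewrite -normr_eq0 normdet_factor (bigD1 i) //= Lii0 normr0 mul0r.
Qed.

Hypothesis L_diag : forall i, L i i != 0.
Variable x : 'rV[C]_k.+1.
Local Notation y := (x *m B^t*).

Lemma dotmx_row_factor_diag (i : 'I_k.+1) :
  (forall l : 'I_k.+1, (l < i)%N -> y 0 l = 0) -> '[row i A, x] = L i i * (y 0 i)^*.
Proof.
move=> y_low; rewrite dotmx_row_factor dotmx_sum (bigD1 i) //= big1 ?addr0 ?mxE //.
move=> l l_neq_i; rewrite mxE; case: (ltngtP l i) => [l_lt_i|i_lt_l|/val_inj l_eq_i].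
- by rewrite y_low ?conjC0 ?mulr0.
- by rewrite L_lower ?mul0r.
- by rewrite l_eq_i eqxx in l_neq_i.
Qed.

Lemma coord_factor_eq0 (i : 'I_k.+1) :
  (forall j : 'I_k.+1, (j < i)%N -> '[row j A, x] = 0) ->
  forall l : 'I_k.+1, (l < i)%N -> y 0 l = 0.
Proof.
move=> x_orth l; have [m] := ubnP l; elim: m l => // m IHm l /ltnSE l_le_m l_lt_i.
have := x_orth l l_lt_i; rewrite dotmx_row_factor_diag => [/eqP|j j_lt_l].
  by rewrite mulf_eq0 (negbTE (L_diag l)) conjC_eq0 => /eqP.
by apply: IHm; [exact: leq_trans j_lt_l l_le_m | exact: ltn_trans j_lt_l l_lt_i].
Qed.

Lemma dotmx_row_le_diag (i : 'I_k.+1) : '[x] = 1 ->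
  (forall j : 'I_k.+1, (j < i)%N -> '[row j A, x] = 0) -> `|'[row i A, x]| <= `|L i i|.
Proof.
move=> x1 x_orth; rewrite dotmx_row_factor_diag; last exact: coord_factor_eq0.
rewrite normrM norm_conjC ler_piMr // -(@expr_le1 _ 2) //.
by rewrite -x1 -dnorm_coord_factor coord_norm_le_dnorm.
Qed.

Lemma dotmx_last_row_eq_diag : '[x] = 1 ->
  (forall j, j != ord_max -> '[row j A, x] = 0) ->
  `|'[row ord_max A, x]| = `|L ord_max ord_max|.
Proof.
move=> x1 x_orth.
have y_low : forall l : 'I_k.+1, (l < @ord_max k)%N -> y 0 l = 0.
  by apply: coord_factor_eq0 => j j_lt; rewrite x_orth // -val_eqE /= ltn_eqF.
rewrite dotmx_row_factor_diag // normrM norm_conjC.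
suff -> : `|y 0 ord_max| = 1 by rewrite mulr1.
apply/eqP; rewrite -(@sqrp_eq1 _ `|y 0 ord_max|) // normCK.
rewrite -x1 -dnorm_coord_factor dotmx_sum (bigD1 ord_max) //= big1 ?addr0 //.
move=> l l_neq.
by rewrite y_low ?mul0r // ltn_neqAle val_eqE l_neq -ltnS ltn_ord.
Qed.

End LowerUnitaryFactor.

Lemma normdet_le_dotmx_last k (A : 'M[C]_k.+1) x :
  (forall i, '[row i A] = 1) -> '[x] = 1 ->
  (forall j, j != ord_max -> '[row j A, x] = 0) ->
  `|\det A| <= `|'[row ord_max A, x]|.
Proof.
move=> A1 x1 x_orth; have [->|detA] := eqVneq (\det A) 0; first by rewrite normr0.
have [L [B [B_unitary defA L_lower]]] := lower_unitary_factor A.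
have L_diag := factor_diag_neq0 B_unitary defA L_lower detA.
rewrite (dotmx_last_row_eq_diag B_unitary defA L_lower L_diag x1 x_orth).
rewrite (normdet_factor B_unitary defA L_lower) (bigD1 ord_max) //= ler_piMr //.
by rewrite prodr_ile1 // => i _; rewrite normr_ge0 (norm_diag_factor_le1 B_unitary defA).
Qed.

Lemma normdet_le_dotmx k (A : 'M[C]_k.+1) j x :
  (forall i, '[row i A] = 1) -> '[x] = 1 ->
  (forall i, i != j -> '[row i A, x] = 0) -> `|\det A| <= `|'[row j A, x]|.
Proof.
move=> A1 x1 x_orth; rewrite -(normdet_xrow j ord_max).
have -> : row j A = row ord_max (xrow j ord_max A) by rewrite row_xrow tpermR.
apply: normdet_le_dotmx_last => [i|//|i i_neq]; rewrite row_xrow //.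
by rewrite x_orth // -{2}(tpermR j ord_max) (inj_eq perm_inj).
Qed.

Lemma prod_dotmx_le_normdet k (A : 'M[C]_k.+1) (X : 'I_k.+1 -> 'rV[C]_k.+1) :
  (forall i, '[row i A] = 1) -> \det A != 0 -> (forall i, '[X i] = 1) ->
  (forall i j, j != i -> '[row j A, X i] = 0) ->
  \prod_(i < k) `|'[row (lift 0 i) A, X (lift 0 i)]| <= `|\det A|.
Proof.
move=> A1 detA X1 X_orth.
have [L [B [B_unitary defA L_lower]]] := lower_unitary_factor A.
have L_diag := factor_diag_neq0 B_unitary defA L_lower detA.
rewrite (normdet_factor B_unitary defA L_lower) big_ord_recl.
rewrite (norm_first_diag_factor B_unitary defA L_lower (A1 0)) mul1r.
apply: ler_prod => i _; rewrite normr_ge0.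
apply: (dotmx_row_le_diag B_unitary defA L_lower L_diag) => // j j_lt.
by rewrite X_orth // -val_eqE /= ltn_eqF.
Qed.

End FubiniStudy.

Theorem mainTheorem10 (C : numClosedFieldType) (n : nat) (hn : (0 < n)%N)
  (U : 'M[C]_(n.+1))
  (hunit : forall i : 'I_n.+1, vnorm (row i U) = 1)
  (hind : row_free U)
  (P : 'I_n.+1 -> 'rV[C]_(n.+1))
  (hP : forall j : 'I_n.+1, vnorm (P j) = 1 /\
          (forall i : 'I_n.+1, i != j -> dotv (row i U) (P j) = 0))
  (d : 'I_n.+1 -> C)
  (hd : forall j : 'I_n.+1, is_dist_pt_hyp (P j) (row j U) (d j))
  (dmin : C)
  (hdmin : (exists j : 'I_n.+1, dmin = d j) /\ (forall j : 'I_n.+1, dmin <= d j)) :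
  dmin ^+ n <= `|\det U| <= dmin.
Proof.
have U1 i : dotmx (row i U) (row i U) = 1 := vnorm_eq1 (hunit i).
have detU : \det U != 0 by rewrite -unitfE -unitmxE -row_free_unit.
pose X j := conjv (P j).
have X1 j : dotmx (X j) (X j) = 1 by rewrite dotmx_conjv (vnorm_eq1 (hP j).1).
have X_orth i j : j != i -> dotmx (row j U) (X i) = 0.
  by move=> ji; rewrite -dotvE (hP i).2.
have dE j : d j = `|dotmx (row j U) (X j)|.
  by rewrite -dotvE (dist_pt_hyp_eq (vnorm_eq1 (hP j).1) (U1 j) (hd j)).
case: hdmin => [[j0 ->] dmin_le]; apply/andP; split.
  apply: le_trans (prod_dotmx_le_normdet U1 detU X1 X_orth).
  rewrite -[n in _ ^+ n]card_ord -prodr_const.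
  by apply: ler_prod => i _; rewrite -dE dmin_le andbT dE normr_ge0.
by rewrite dE normdet_le_dotmx // => i; apply: X_orth.
Qed.
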